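(* Let $p^{(3)}(n)$ be defined by $\sum_{n\ge0}p^{(3)}(n)q^n=\prod_{j\ge1}(1-q^j)^{-3}$ (the number of three-colored partitions of $n$). Then for every $n\ge0$, $$p^{(3)}(n)=\sum_{\substack{c\in\mathcal C_{P_3}\\ |c|=n}}\ \prod_{j\ge1}\big((-1)^{j+1}(2j+1)\big)^{m_{j(j+1)/2}(c)}=\sum_{\substack{c\in\mathcal C_{P_3}\\ |c|=n}}(-1)^{\ell^+(c)}\prod_{j\ge1}(2j+1)^{m_{j(j+1)/2}(c)},$$ where $P_3=\{j(j+1)/2:j\in\mathbb N\}$.
   Context: A composition is an ordered finite sequence of positive integers (including the empty one); $|c|$ is the sum of parts; $m_i(c)$ is the number of parts of $c$ equal to $i$; $\mathcal C_T$ is the set of compositions with all parts in $T$. $\ell^+(c)$ is the number of parts of $c$ lying in $\{m(2m+1): m\in\mathbb N\}$ (the triangular numbers $j(j+1)/2$ with $j$ even). *)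

From mathcomp Require Import all_boot all_order all_algebra.
Set Implicit Arguments. Unset Strict Implicit. Unset Printing Implicit Defensive.
Import GRing.Theory Num.Theory.
Local Open Scope ring_scope.

(* p^(3)(n): coefficient of q^n in prod_{j>=1} (1-q^j)^(-3).  Modulo q^(n+1),
   (1-q^j)^(-1) = sum_{k=0}^{n} q^(j k), and factors with j > n are = 1. *)
Definition p3 (n : nat) : int :=
  (\prod_(1 <= j < n.+1) (\sum_(0 <= k < n.+1) ('X^(j * k) : {poly int})) ^+ 3)`_n.

Definition tri (j : nat) : nat := (j * j.+1) %/ 2.

Definition P3 : pred nat := fun m => has (fun j => tri j == m) (iota 0 m.+1).

Definition Pplus : pred nat := fun x => has (fun m => m * (2 * m).+1 == x)%N (iota 0 x.+1).

Definition in_comps (T : pred nat) (c : seq nat) : bool :=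
  all (fun x => (0 < x)%N && T x) c.

Definition mult (i : nat) (c : seq nat) : nat := count_mem i c.

Definition ellplus (c : seq nat) : nat := count Pplus c.

(* sum of F c over all compositions c in C_T with |c| = n.  Such a c has
   length l <= n and all parts <= n, so it is exactly one sequence
   [seq val (f i) | i <- enum 'I_l] with l < n.+1 and f : 'I_l -> 'I_n.+1. *)
Definition comp_seq (l n : nat) (f : {ffun 'I_l -> 'I_n.+1}) : seq nat :=
  [seq nat_of_ord (f i) | i <- enum 'I_l].

Definition sum_comps (T : pred nat) (n : nat) (F : seq nat -> int) : int :=
  \sum_(l < n.+1) \sum_(f : {ffun 'I_l -> 'I_n.+1} |
        in_comps T (comp_seq f) && (sumn (comp_seq f) == n)) F (comp_seq f).

(* prod_{j>=1} ((-1)^(j+1)(2j+1))^(m_{j(j+1)/2}(c)); only j <= |c| can have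
   nonzero exponent, all other factors are 1. *)
Definition weight1 (c : seq nat) : int :=
  \prod_(1 <= j < (sumn c).+1) ((-1) ^+ j.+1 * (2 * j).+1%:R) ^+ mult (tri j) c.

Definition weight2 (c : seq nat) : int :=
  (-1) ^+ ellplus c * \prod_(1 <= j < (sumn c).+1) ((2 * j).+1%:R) ^+ mult (tri j) c.

(** The proof follows Jacobi: [(q;q)_oo^3 = J(q) := sum_k (-1)^k (2k+1) q^(k(k+1)/2)].
    Writing [J = 1 - S], where [S] is supported on the nonzero triangular numbers
    with coefficient [(-1)^(k+1) (2k+1)] at [k(k+1)/2], the generating function of
    [p^(3)] is [1/J = sum_l S^l], and the coefficient of [q^n] in [S^l] is the
    weighted count of the compositions of [n] into [l] triangular parts.  The
    second equality is the parity of [k] read off at each part.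

    Jacobi's identity is obtained from its finite form.  For
    [H_n(x) = prod_(i<n) (1 - q^(i+1) x) * prod_(i<=n) (x - q^i)], Cauchy's
    q-binomial theorem gives the coefficients of [H_n]; on the other hand
    [H_n = (x - 1) G_n] with [G_n(1) = (q;q)_n^2], so [H_n'(1) = (q;q)_n^2], i.e.
    [(q;q)_n^2 = sum_k (-1)^k (2k+1) q^(k(k+1)/2) [2n+1, n-k]_q].  Multiplying by
    [(q;q)_n] and using [(q;q)_n [2n+1, n-k]_q = 1 mod q^(n-k+1)] yields
    [(q;q)_n^3 = J mod q^(n+1)]. *)

From mathcomp Require Import all_boot all_order all_algebra.
From mathcomp Require Import zify ring.
Set Implicit Arguments. Unset Strict Implicit. Unset Printing Implicit Defensive.
Import GRing.Theory Num.Theory.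
Local Open Scope ring_scope.

(** * Triangular numbers *)

Lemma tri_binom j : tri j = 'C(j.+1, 2).
Proof. by rewrite /tri bin2 /= mulnC -divn2. Qed.

Lemma triS j : tri j.+1 = (tri j + j.+1)%N.
Proof. by rewrite !tri_binom binS bin1. Qed.

Lemma triD a b : tri (a + b) = (tri a + tri b + a * b)%N.
Proof.
elim: b => [|b IH]; first by rewrite !addn0 muln0 addn0.
by rewrite addnS !triS IH; lia.
Qed.

Lemma tri_mul2 j : (tri j * 2 = j * j.+1)%N.
Proof. by rewrite /tri divnK // dvdn2 oddM /= andbN. Qed.

Lemma leq_tri j : (j <= tri j)%N.
Proof. by elim: j => // j IH; rewrite triS; lia. Qed.

Lemma tri_inj : injective tri.
Proof. by move=> j k e; have := tri_mul2 j; have := tri_mul2 k; rewrite e; nia. Qed.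

Lemma tri_double m : tri (2 * m) = (m * (2 * m).+1)%N.
Proof. by rewrite /tri -mulnA mulKn. Qed.

Lemma P3_tri k : P3 (tri k).
Proof. by apply/hasP; exists k; rewrite // mem_iota /= add0n ltnS leq_tri. Qed.

Lemma P3_pos_tri x : (0 < x)%N -> P3 x -> exists2 k, (0 < k <= x)%N & tri k = x.
Proof.
move=> x_gt0 /hasP[k]; rewrite mem_iota /= add0n ltnS => le_kx /eqP tri_k.
exists k => //; rewrite le_kx andbT lt0n.
by apply: contraTneq x_gt0 => k0; rewrite -tri_k k0.
Qed.

Lemma Pplus_tri j : Pplus (tri j) = ~~ odd j.
Proof.
apply/hasP/idP => [[m _ /eqP]|even_j].
  by rewrite -tri_double => /tri_inj <-; rewrite mul2n odd_double.
exists j./2; last by rewrite -tri_double -{2}(odd_double_half j) (negbTE even_j) -muln2 mulnC.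
rewrite mem_iota /= add0n ltnS (leq_trans _ (leq_tri j)) // leq_half_double; lia.
Qed.

(** * Equality of power series up to a given order *)

Definition eqm (R : nzRingType) (N : nat) (p q : {poly R}) :=
  forall i, (i <= N)%N -> p`_i = q`_i.

Section Truncation.
Variables (R : nzRingType) (N : nat).
Implicit Types p q r : {poly R}.

Lemma eqm_refl p : eqm N p p. Proof. by []. Qed.

Lemma eqm_sym p q : eqm N p q -> eqm N q p.
Proof. by move=> pq i le_iN; rewrite pq. Qed.

Lemma eqm_trans p q r : eqm N p q -> eqm N q r -> eqm N p r.
Proof. by move=> pq qr i le_iN; rewrite pq ?qr. Qed.

Lemma eqm_mul p q p' q' : eqm N p p' -> eqm N q q' -> eqm N (p * q) (p' * q').
Proof.
move=> pp' qq' i le_iN; rewrite !coefM; apply: eq_bigr => j _.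
rewrite pp' ?qq' //; last by rewrite (leq_trans _ le_iN) // -ltnS.
by rewrite (leq_trans _ le_iN) // leq_subr.
Qed.

Lemma eqm_exp p q k : eqm N p q -> eqm N (p ^+ k) (q ^+ k).
Proof. by move=> pq; elim: k => [|k IH]; rewrite ?expr0 // !exprS; apply: eqm_mul. Qed.

Lemma eqm_muln p q c : eqm N p q -> eqm N (p *+ c) (q *+ c).
Proof. by move=> pq i le_iN; rewrite !coefMn pq. Qed.

Lemma eqm_sum (I : Type) (r : seq I) (F G : I -> {poly R}) :
  (forall i, eqm N (F i) (G i)) -> eqm N (\sum_(i <- r) F i) (\sum_(i <- r) G i).
Proof. by move=> FG i le_iN; rewrite !coef_sum; apply: eq_bigr => j _; apply: FG. Qed.

Lemma eqm_prod (I : eqType) (r : seq I) (F G : I -> {poly R}) :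
  {in r, forall i, eqm N (F i) (G i)} -> eqm N (\prod_(i <- r) F i) (\prod_(i <- r) G i).
Proof.
elim: r => [|x r IH] FG; first by rewrite !big_nil.
rewrite !big_cons; apply: eqm_mul; first by apply: FG; rewrite mem_head.
by apply: IH => i r_i; apply: FG; rewrite in_cons r_i orbT.
Qed.

Lemma eqm_shift M k p q : (N <= M + k)%N -> eqm M p q -> eqm N ('X^k * p) ('X^k * q).
Proof. by move=> le_N pq i le_iN; rewrite !coefXnM; case: ltnP => // ?; rewrite pq //; lia. Qed.

Lemma eqm_mulXn_sub1 p k : (N < k)%N -> eqm N (p * (1 - 'X^k)) p.
Proof.
move=> lt_Nk i le_iN; rewrite mulrBr mulr1 coefB coefMXn.
by rewrite (_ : (i < k)%N = true) ?subr0 //; lia.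
Qed.

(** A series with constant term [1] is invertible, hence cancellable. *)
Lemma eqm_mul2l p x y : p`_0 = 1 -> eqm N (p * x) (p * y) -> eqm N x y.
Proof.
move=> p0 pxy; suff xy0 i : (i <= N)%N -> (x - y)`_i = 0.
  by move=> i /xy0 /eqP; rewrite coefB subr_eq0 => /eqP.
have pxy0 j : (j <= N)%N -> (p * (x - y))`_j = 0.
  by move=> le_jN; rewrite mulrBr coefB pxy // subrr.
elim/ltn_ind: i => i IH le_iN.
have := pxy0 i le_iN; rewrite coefM big_ord_recl subn0 p0 mul1r big1 ?addr0 //.
by move=> j _; rewrite IH ?mulr0 // lift0; have := ltn_ord j; lia.
Qed.

Lemma coef_expr_low p k i : p`_0 = 0 -> (i < k)%N -> (p ^+ k)`_i = 0.
Proof.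
move=> p0; elim: k i => // k IH i lt_ik.
rewrite exprS coefM big1 // => j _.
by case: (nat_of_ord j) (ltn_ord j) => [|j'] lt_j; rewrite ?p0 ?mul0r // IH ?mulr0 //; lia.
Qed.

Lemma eqm_trunc p : eqm N p (\sum_(m < N.+1) p`_m *: 'X^m).
Proof.
move=> i le_iN; rewrite coef_sum (bigD1 (Ordinal (le_iN : (i < N.+1)%N))) //=.
rewrite coefZ coefXn eqxx mulr1 big1 ?addr0 // => j /eqP ne_ji.
rewrite coefZ coefXn (_ : (i == j) = false) ?mulr0 //.
by apply/eqP => e; apply: ne_ji; apply: val_inj; rewrite /= e.
Qed.

End Truncation.

Lemma eqm_inv_uniq (R : comNzRingType) N (a x y : {poly R}) :
  eqm N (a * x) 1 -> eqm N (a * y) 1 -> eqm N x y.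
Proof.
move=> ax ay; apply: eqm_trans (_ : eqm N _ (x * (a * y))) _.
  by rewrite -[X in eqm _ X _]mulr1; apply: eqm_mul (eqm_sym ay).
by rewrite mulrA [x * a]mulrC -[X in eqm _ _ X]mul1r; apply: eqm_mul.
Qed.

Lemma prod_monomial (R : comNzRingType) (I : finType) (a : I -> R) (e : I -> nat) :
  \prod_i (a i *: ('X^(e i) : {poly R})) = (\prod_i a i) *: 'X^(\sum_i e i).
Proof.
under eq_bigr => i _ do rewrite -mul_polyC.
rewrite big_split /= -mul_polyC rmorph_prod /=; congr (_ * _).
by rewrite (big_morph (fun n => ('X^n : {poly R})) (fun x y => exprD _ x y) (expr0 _)).
Qed.

Lemma coef_expr_ffun (R : comNzRingType) (p : {poly R}) l N : (p ^+ l)`_N =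
  \sum_(f : {ffun 'I_l -> 'I_N.+1} | (\sum_i (f i : nat) == N)%N) \prod_i p`_(f i).
Proof.
rewrite (eqm_exp l (@eqm_trunc _ N p) (leqnn N)).
rewrite -[l in _ ^+ l](card_ord l) -prodr_const bigA_distr_bigA /= coef_sum.
rewrite [RHS]big_mkcond /=; apply: eq_bigr => f _.
by rewrite prod_monomial coefZ coefXn eq_sym; case: eqP; rewrite ?mulr1 ?mulr0.
Qed.

(** * Gaussian binomial coefficients *)

Local Notation P := {poly int}.

Fixpoint qbin (M j : nat) : P :=
  match M, j with
  | 0, 0 => 1
  | 0, _.+1 => 0
  | M'.+1, 0 => 1
  | M'.+1, j'.+1 => qbin M' j'.+1 + 'X^(M' - j') * qbin M' j'
  end.

Definition qpoch (m : nat) : P := \prod_(0 <= i < m) (1 - 'X^(i.+1)).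

Lemma qpochS m : qpoch m.+1 = qpoch m * (1 - 'X^(m.+1)).
Proof. by rewrite /qpoch big_nat_recr. Qed.

Lemma qpoch0 : qpoch 0 = 1. Proof. by rewrite /qpoch big_geq. Qed.

Lemma qbin0 M : qbin M 0 = 1. Proof. by case: M. Qed.

Lemma qbin_gt M j : (M < j)%N -> qbin M j = 0.
Proof. by elim: M j => [|M IH] [|j] //= lt_Mj; rewrite !IH ?mulr0 ?addr0 //; lia. Qed.

Lemma qbin_qpoch M a : (a <= M)%N -> qbin M a * qpoch a * qpoch (M - a) = qpoch M.
Proof.
elim: M a => [|M IH] [|a] //=; first by rewrite qpoch0 !mulr1.
  by rewrite qpoch0 subn0 !mul1r.
rewrite ltnS leq_eqVlt => /orP[/eqP->|lt_aM].
  have := IH M (leqnn M); rewrite subnn qpoch0 mulr1 => IHM.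
  by rewrite qbin_gt // add0r subnn expr0 mul1r qpoch0 mulr1 qpochS mulrA IHM.
have MSa : (M - a = (M - a.+1).+1)%N by lia.
have XMS : ('X^(M.+1) : P) = 'X^(M - a) * 'X^(a.+1) by rewrite -exprD; congr (_ ^+ _); lia.
rewrite subSS MSa qpochS -MSa qpochS XMS.
transitivity ((qbin M a.+1 * qpoch a.+1 * qpoch (M - a.+1)) * (1 - 'X^(M - a))
   + 'X^(M - a) * (qbin M a * qpoch a * qpoch (M - a)) * (1 - 'X^(a.+1))).
  by rewrite qpochS MSa qpochS -MSa; ring.
by rewrite IH // IH ?(ltnW lt_aM) //; ring.
Qed.

Lemma qpoch_coef0 m : (qpoch m)`_0 = 1.
Proof.
elim: m => [|m IH]; first by rewrite qpoch0 coef1.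
by rewrite qpochS coef0M IH coefB coef1 coefXn subr0 mul1r.
Qed.

Lemma qpoch_neq0 m : qpoch m != 0.
Proof. by apply/eqP => /(congr1 (fun p : P => p`_0)); rewrite qpoch_coef0 coef0 => /eqP. Qed.

Lemma qbin_sym M a : (a <= M)%N -> qbin M a = qbin M (M - a).
Proof.
move=> le_aM; have := qbin_qpoch (leq_subr a M); rewrite subKn // => qpochM.
apply: (mulIf (qpoch_neq0 (M - a))); apply: (mulIf (qpoch_neq0 a)).
by rewrite -mulrA [qpoch (M - a) * _]mulrC mulrA qbin_qpoch // -qpochM.
Qed.

Lemma eqm_qpoch a b : (a <= b)%N -> eqm a (qpoch a) (qpoch b).
Proof.
elim: b => [|b IH]; first by rewrite leqn0 => /eqP->.
rewrite leq_eqVlt => /orP[/eqP->//|]; rewrite ltnS => le_ab.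
by rewrite qpochS; apply: eqm_trans (IH le_ab) (eqm_sym (eqm_mulXn_sub1 _ _)); lia.
Qed.

(** [(q;q)_N [2N+1, m]_q = (q;q)_(2N+1) / ((q;q)_m (q;q)_(2N+1-m))], and both
    [(q;q)_N] and [(q;q)_(2N+1-m)] agree with [(q;q)_(2N+1)] up to order [m]. *)
Lemma eqm_qpoch_qbin N m : (m <= N)%N -> eqm m (qpoch N * qbin (N.+1 + N) m) 1.
Proof.
move=> le_mN.
have qpochNm : eqm m (qpoch N) (qpoch m) by apply/eqm_sym/eqm_qpoch.
apply: (@eqm_mul2l _ _ (qpoch N)); first exact: qpoch_coef0.
apply: eqm_trans (_ : eqm m _ (qpoch m * (qpoch (N.+1 + N - m) * qbin (N.+1 + N) m))) _.
  apply: eqm_mul => //; apply: eqm_mul => //.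
  by apply: eqm_trans qpochNm _; apply: eqm_qpoch; lia.
have -> : qpoch m * (qpoch (N.+1 + N - m) * qbin (N.+1 + N) m) = qpoch (N.+1 + N).
  by rewrite -[RHS](@qbin_qpoch _ m); [ring | lia].
rewrite mulr1; apply: eqm_trans _ (eqm_sym qpochNm).
by apply/eqm_sym/eqm_qpoch; lia.
Qed.

(** * The finite Jacobi triple product *)

(** Polynomials in [x] over [Z[q]]; [qX a] is the constant [q^a]. *)
Local Notation PP := {poly P}.

Definition qX (a : nat) : PP := ('X^a)%:P.

Lemma qXD a b : qX (a + b) = qX a * qX b.
Proof. by rewrite /qX exprD polyCM. Qed.

Lemma qX0 : qX 0 = 1. Proof. by rewrite /qX expr0. Qed.

Lemma comp_qX a (p : PP) : qX a \Po p = qX a.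
Proof. exact: comp_polyC. Qed.

Lemma prod_qX m : \prod_(0 <= i < m) qX i = qX (\sum_(0 <= i < m) i).
Proof.
elim: m => [|m IH]; first by rewrite !big_geq // qX0.
by rewrite !big_nat_recr //= IH qXD.
Qed.

Definition cauchy_prod (M : nat) : PP := \prod_(0 <= l < M) (1 - qX l.+1 * 'X).

Lemma coef_mul_linear (p : PP) a j :
  (p * (1 - qX a * 'X))`_j = p`_j - (if j is j'.+1 then 'X^a * p`_j' else 0).
Proof.
rewrite mulrBr mulr1 coefB mulrA coefMX; case: j => //= j.
by rewrite /qX coefMC mulrC.
Qed.

Lemma coef_cauchy_prod M j : (cauchy_prod M)`_j = (-1) ^+ j * 'X^(tri j) * qbin M j.
Proof.
elim: M j => [|M IH] j.
  by rewrite /cauchy_prod big_geq // coef1; case: j => [|j]; rewrite ?mulr0 // !mul1r.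
rewrite /cauchy_prod big_nat_recr //= -/(cauchy_prod M) coef_mul_linear IH.
case: j => [|i] /=; first by rewrite subr0 qbin0.
rewrite IH triS exprS.
case: (leqP i M) => le_iM; last first.
  by rewrite (qbin_gt le_iM) !(@qbin_gt _ i.+1) 1?ltnW //; ring.
have XMS : ('X^(M.+1) : P) * 'X^(tri i) = 'X^(tri i + i.+1) * 'X^(M - i).
  by rewrite -!exprD; congr (_ ^+ _); lia.
transitivity (-1 * (-1) ^+ i * ('X^(tri i + i.+1) * qbin M i.+1
      + ('X^(M.+1) * 'X^(tri i)) * qbin M i)); first ring.
by rewrite XMS; ring.
Qed.

Lemma coef_comp_scale (p : PP) (a : P) j : (p \Po (a%:P * 'X))`_j = a ^+ j * p`_j.
Proof.
rewrite coef_comp_poly.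
under eq_bigr => i _ do rewrite exprMn -polyC_exp coefCM coefXn.
case: (ltnP j (size p)) => lt_jp.
  rewrite (bigD1 (Ordinal lt_jp)) //= eqxx mulr1 big1 ?addr0; first by rewrite mulrC.
  move=> i /eqP ne_ij; rewrite (_ : (j == i) = false) ?mulr0 //.
  by apply/eqP => e; apply: ne_ij; apply: val_inj; rewrite /= e.
rewrite (leq_sizeP _ _ lt_jp) // mulr0 big1 // => i _.
by rewrite (_ : (j == i) = false) ?mulr0 //; apply/negbTE; rewrite neq_ltn (leq_trans (ltn_ord i) lt_jp) orbT.
Qed.

Definition jtp (n : nat) : PP :=
  \prod_(0 <= i < n) (1 - qX i.+1 * 'X) * \prod_(0 <= i < n.+1) ('X - qX i).

Lemma jtp_comp_scale n :
  jtp n \Po (qX n.+1 * 'X) = ((-1) ^+ n.+1 * 'X^(tri n))%:P * cauchy_prod (n.+1 + n).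
Proof.
rewrite /jtp comp_polyM !rmorph_prod /=.
have comp1 i : (1 - qX i.+1 * 'X) \Po (qX n.+1 * 'X) = 1 - qX (i + n.+1).+1 * 'X.
  by rewrite comp_polyB comp_polyM comp_polyX comp_qX rmorph1 mulrA -qXD addSn.
have comp2 i : (i < n.+1)%N ->
    ('X - qX i) \Po (qX n.+1 * 'X) = - qX i * (1 - qX (n - i).+1 * 'X).
  move=> lt_in; rewrite comp_polyB comp_polyX comp_qX mulNr mulrBr mulr1 mulrA -qXD.
  by rewrite (_ : (i + (n - i).+1 = n.+1)%N) ?opprB //; lia.
under eq_bigr => i _ do rewrite comp1.
rewrite big_nat_cond [X in _ * X]big_nat_cond.
under [X in _ * X]eq_bigr => i /andP[/andP[_ lt_in] _] do rewrite (comp2 i lt_in).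
rewrite -!big_nat_cond big_split /=.
have signs : \prod_(0 <= i < n.+1) (- qX i) = ((-1) ^+ n.+1 * 'X^(tri n))%:P.
  rewrite (eq_bigr (fun i => (-1) * qX i)) => [|i _]; last by rewrite mulN1r.
  by rewrite big_split /= prodr_const_nat prod_qX bin2_sum -tri_binom subn0 polyCM polyC_exp polyCN.
have reversed : \prod_(0 <= i < n.+1) (1 - qX (n - i).+1 * 'X) =
                \prod_(0 <= i < n.+1) (1 - qX i.+1 * 'X).
  rewrite big_rev_mkord big_mkord subn0; apply: eq_bigr => i _.
  by rewrite subSS subKn // -ltnS.
have split : cauchy_prod (n.+1 + n) = \prod_(0 <= i < n.+1) (1 - qX i.+1 * 'X) *
    \prod_(0 <= i < n) (1 - qX (i + n.+1).+1 * 'X).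
  rewrite /cauchy_prod (@big_cat_nat _ _ _ n.+1) ?leq_addr //=.
  have := big_addn 0 (n.+1 + n) n.+1 xpredT (fun i => 1 - qX i.+1 * 'X).
  by rewrite add0n addKn => ->.
by rewrite signs reversed split; ring.
Qed.

(** The power of [q] in the [x^j] coefficient of [jtp n]. *)
Definition jtp_exp (n j : nat) : nat :=
  if (n < j)%N then tri (j - n.+1) else tri (n - j).

Lemma jtp_expE n j : (n.+1 * j + jtp_exp n j = tri n + tri j)%N.
Proof.
rewrite /jtp_exp; have := tri_mul2 n; case: ltnP => le_nj tri_n.
  have [k ->] : exists k, j = (n.+1 + k)%N by exists (j - n.+1)%N; lia.
  by rewrite addKn triD triS; nia.
have [k def_n] : exists k, n = (k + j)%N by exists (n - j)%N; lia.
by have := tri_mul2 j; rewrite def_n addnK triD in tri_n *; nia.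
Qed.

Lemma coef_jtp n j :
  (jtp n)`_j = (-1) ^+ (n.+1 + j) * 'X^(jtp_exp n j) * qbin (n.+1 + n) j.
Proof.
have scaled := congr1 (fun p : PP => p`_j) (jtp_comp_scale n).
rewrite /= coef_comp_scale coefCM coef_cauchy_prod -exprM in scaled.
move: (qbin (n.+1 + n) j) scaled => b scaled.
apply: (mulfI (monic_neq0 (monicXn _ (n.+1 * j)))); rewrite scaled.
transitivity ((-1) ^+ n.+1 * (-1) ^+ j * 'X^(tri n + tri j) * b); first by rewrite exprD; ring.
by rewrite -jtp_expE (exprD _ (n.+1 * j)) (exprD (-1) n.+1 j); ring.
Qed.

Definition jtp_cofactor n : PP := \prod_(0 <= i < n) ((1 - qX i.+1 * 'X) * ('X - qX i.+1)).

Lemma jtp_factor n : jtp n = ('X - 1) * jtp_cofactor n.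
Proof. by rewrite /jtp big_nat_recl // qX0 /jtp_cofactor big_split /=; ring. Qed.

Lemma horner1_jtp_cofactor n : (jtp_cofactor n).[1] = qpoch n * qpoch n.
Proof.
rewrite /jtp_cofactor horner_prod /qpoch -big_split /=; apply: eq_bigr => i _.
by rewrite hornerM hornerD hornerN hornerM hornerX !hornerC mulr1 hornerXsubC.
Qed.

Lemma size_jtp n : (size (jtp n) <= (n.+1 + n).+1)%N.
Proof. by apply/leq_sizeP => j lt_j; rewrite coef_jtp qbin_gt ?mulr0. Qed.

Lemma qpoch_sqr_deriv_jtp n :
  qpoch n * qpoch n = \sum_(j < (n.+1 + n).+1) (jtp n)`_j *+ j.
Proof.
have <- : (jtp n)^`().[1] = qpoch n * qpoch n.
  rewrite jtp_factor -polyC1 derivM derivXsubC hornerD !hornerM hornerXsubC subrr.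
  by rewrite mul0r addr0 hornerC mul1r horner1_jtp_cofactor.
rewrite (@horner_coef_wide _ (n.+1 + n)).
  rewrite [RHS]big_ord_recl mulr0n add0r; apply: eq_bigr => i _.
  by rewrite coef_deriv expr1n mulr1 lift0.
apply/leq_sizeP => j lt_j; rewrite coef_deriv.
by rewrite (leq_sizeP _ _ (size_jtp n)) ?mul0rn.
Qed.

Lemma sign_double_add m k : (-1) ^+ (m.*2 + k) = (-1) ^+ k :> P.
Proof. by rewrite exprD -mul2n mulnC exprM sqrr_sign mul1r. Qed.

(** Pairing the coefficients of [x^(n-k)] and [x^(n+1+k)] in [H_n'(1)]. *)
Lemma finite_jacobi n : qpoch n * qpoch n =
  \sum_(k < n.+1) ((-1) ^+ k * 'X^(tri k) * qbin (n.+1 + n) (n - k)) *+ (2 * k).+1.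
Proof.
rewrite qpoch_sqr_deriv_jtp (_ : ((n.+1 + n).+1 = n.+1 + n.+1)%N); last by lia.
rewrite big_split_ord /=.
have rev (F : nat -> P) : \sum_(i < n.+1) F i = \sum_(i < n.+1) F (n - i)%N.
  rewrite -(big_mkord xpredT F) big_rev_mkord subn0.
  by apply: eq_bigr => i _; rewrite subSS.
rewrite (rev (fun i => (jtp n)`_i *+ i)) -big_split /=; apply: eq_bigr => k _.
have le_kn : (k <= n)%N by rewrite -ltnS.
rewrite !coef_jtp /jtp_exp (@qbin_sym _ (n.+1 + k)); last by lia.
rewrite (_ : (n < n - k)%N = false); last by lia.
rewrite (_ : (n < n.+1 + k)%N = true); last by lia.
rewrite (_ : (n - (n - k) = k)%N); last by lia.
rewrite (_ : (n.+1 + k - n.+1 = k)%N); last by lia.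
rewrite (_ : (n.+1 + n - (n.+1 + k) = n - k)%N); last by lia.
rewrite (_ : (n.+1 + (n - k) = (n - k).*2 + k.+1)%N); last by lia.
rewrite (_ : (n.+1 + (n.+1 + k) = (n.+1).*2 + k)%N); last by lia.
rewrite !sign_double_add exprS mulN1r !mulNr mulNrn addrC -mulrnBr; last by lia.
by congr (_ *+ _); lia.
Qed.

(** * Jacobi's identity *)

Definition jacobi (N : nat) : P :=
  \sum_(k < N.+1) ((-1) ^+ k * 'X^(tri k)) *+ (2 * k).+1.

Lemma eqm_qpoch_jacobi N : eqm N (qpoch N ^+ 3) (jacobi N).
Proof.
rewrite (_ : qpoch N ^+ 3 = qpoch N * (qpoch N * qpoch N)); last by ring.
rewrite finite_jacobi mulr_sumr /jacobi; apply: eqm_sum => k.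
rewrite mulrnAr; apply: eqm_muln.
rewrite (_ : qpoch N * _ =
    (-1) ^+ k * ('X^(tri k) * (qpoch N * qbin (N.+1 + N) (N - k)))); last by ring.
rewrite -[X in eqm _ _ X]mulr1 -mulrA; apply: eqm_mul => //.
apply: (@eqm_shift _ _ (N - k)); first by have := leq_tri k; lia.
by apply: eqm_qpoch_qbin; rewrite leq_subr.
Qed.

(** * Expansion of [1 / jacobi] over compositions *)

(** The coefficient of [q^x] in [wpoly N] is the weight of a part [x]. *)
Definition wpoly (N : nat) : P := 1 - jacobi N.

Definition geom (N : nat) : P := \sum_(l < N.+1) wpoly N ^+ l.

Lemma coef_jacobi N m :
  (jacobi N)`_m = \sum_(k < N.+1) ((-1) ^+ k *+ (2 * k).+1) * (m == tri k)%:R.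
Proof.
rewrite /jacobi coef_sum; apply: eq_bigr => k _.
by rewrite coefMn -polyC1 -polyCN -polyC_exp coefCM coefXn mulrnAl.
Qed.

Lemma wpoly_coef_tri N k : (0 < k <= N)%N ->
  (wpoly N)`_(tri k) = (-1) ^+ k.+1 * (2 * k).+1%:R.
Proof.
move=> /andP[k_gt0 le_kN]; have lt_kN : (k < N.+1)%N by [].
rewrite /wpoly coefB coef1 coef_jacobi (_ : (tri k == 0)%N = false); last first.
  by apply/negbTE; rewrite -lt0n (leq_trans k_gt0 (leq_tri k)).
rewrite (bigD1 (Ordinal lt_kN)) //= eqxx mulr1 big1 ?addr0.
  by rewrite sub0r exprS mulN1r mulNr -mulr_natr.
move=> i /eqP ne_ik; rewrite (_ : (tri k == tri i) = false) ?mulr0 //.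
by apply/eqP => /tri_inj e; apply: ne_ik; apply: val_inj; rewrite /= e.
Qed.

Lemma wpoly_coef_eq0 N m : ~~ ((0 < m)%N && P3 m) -> (wpoly N)`_m = 0.
Proof.
rewrite /wpoly coefB coef1 coef_jacobi; case: m => [_|m /= not_P3].
  rewrite (bigD1 ord0) //= big1 ?addr0 ?mulr1 ?subrr // => k /eqP ne_k0.
  rewrite (_ : (0 == tri k)%N = false) ?mulr0 //; apply/eqP => tri_k.
  apply: ne_k0; apply: val_inj; have := leq_tri k; rewrite -tri_k /=; lia.
rewrite big1 ?subr0 // => k _.
case: eqP => [tri_k|_]; last by rewrite mulr0.
by rewrite tri_k P3_tri in not_P3.
Qed.

Lemma leq_mem_sumn (x : nat) (c : seq nat) : x \in c -> (x <= sumn c)%N.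
Proof.
elim: c => //= y c IH; rewrite in_cons => /orP[/eqP->|/IH le_xc]; first exact: leq_addr.
exact: leq_trans le_xc (leq_addl _ _).
Qed.

Lemma in_comps_P3_tri c x : in_comps P3 c -> x \in c ->
  exists2 k, (0 < k <= sumn c)%N & tri k = x.
Proof.
move=> /allP c_P3 c_x; have /andP[x_gt0 P3_x] := c_P3 x c_x.
have [k /andP[k_gt0 le_kx] tri_k] := P3_pos_tri x_gt0 P3_x.
by exists k; rewrite // k_gt0 (leq_trans le_kx (leq_mem_sumn c_x)).
Qed.

Lemma prod_exp_eq_tri (F : nat -> int) M k : (0 < k <= M)%N ->
  \prod_(1 <= j < M.+1) F j ^+ (tri j == tri k) = F k.
Proof.
move=> le_kM; rewrite (bigD1_seq k) /=; last exact: iota_uniq.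
  rewrite eqxx expr1 big1 ?mulr1 // => j ne_jk.
  by rewrite (_ : (tri j == tri k) = false) //; apply: contraNF ne_jk => /eqP/tri_inj->.
by rewrite mem_index_iota; lia.
Qed.

Lemma prod_exp_mult (F : nat -> int) (r c : seq nat) :
  \prod_(j <- r) F j ^+ mult (tri j) c = \prod_(x <- c) \prod_(j <- r) F j ^+ (tri j == x).
Proof.
elim: c => [|x c IH]; first by rewrite big_nil; apply: big1 => j _; rewrite expr0.
rewrite big_cons -IH -big_split /=; apply: eq_bigr => j _.
by rewrite /mult /= -exprD eq_sym.
Qed.

Lemma sign_ellplus (c : seq nat) : (-1) ^+ ellplus c = \prod_(x <- c) (-1) ^+ Pplus x :> int.
Proof. by elim: c => [|x c IH]; rewrite ?big_nil // big_cons -IH /ellplus /= exprD. Qed.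

Lemma prod_wpoly_coef N c : sumn c = N ->
  \prod_(x <- c) (wpoly N)`_x = if in_comps P3 c then weight1 c else 0.
Proof.
move=> sum_c; case: ifP => [c_P3|/negbT/allPn[x c_x not_P3]].
  rewrite /weight1 prod_exp_mult; apply: eq_big_seq => x c_x.
  have [k k_gt0 <-] := in_comps_P3_tri c_P3 c_x.
  by rewrite prod_exp_eq_tri // wpoly_coef_tri -?sum_c.
apply/eqP; rewrite prodf_seq_eq0; apply/hasP; exists x => //.
by rewrite wpoly_coef_eq0.
Qed.

Lemma weight1_weight2 c : in_comps P3 c -> weight1 c = weight2 c.
Proof.
move=> c_P3; rewrite /weight1 /weight2 !prod_exp_mult sign_ellplus -big_split /=.
apply: eq_big_seq => x c_x; have [k k_gt0 <-] := in_comps_P3_tri c_P3 c_x.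
by rewrite !prod_exp_eq_tri // Pplus_tri -signr_odd.
Qed.

Lemma coef_geom N : (geom N)`_N = sum_comps P3 N weight1.
Proof.
rewrite /geom coef_sum /sum_comps; apply: eq_bigr => l _; rewrite coef_expr_ffun.
rewrite [LHS]big_mkcond [RHS]big_mkcond; apply: eq_bigr => f _.
have -> : (\sum_i (f i : nat))%N = sumn (comp_seq f).
  by rewrite sumnE /comp_seq big_map big_enum.
have -> : \prod_i (wpoly N)`_(f i) = \prod_(x <- comp_seq f) (wpoly N)`_x.
  by rewrite /comp_seq big_map big_enum.
by case: eqP => [/prod_wpoly_coef->|_]; rewrite ?andbT ?andbF.
Qed.

(** * Three-colored partitions *)

Lemma eqm_qpoch_geom_prod N :
  eqm N (qpoch N * \prod_(1 <= j < N.+1) \sum_(0 <= k < N.+1) 'X^(j * k)) 1.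
Proof.
rewrite /qpoch -(big_add1 _ _ 0 N.+1 xpredT (fun j => 1 - 'X^j)) /= -big_split /=.
apply: eqm_trans (_ : eqm N _ (\prod_(j <- index_iota 1 N.+1) (1 : P))) _; last by rewrite big1.
apply: eqm_prod => j; rewrite mem_index_iota => /andP[j_gt0 _].
rewrite big_mkord (eq_bigr (fun k : 'I_N.+1 => ('X^j : P) ^+ k)) => [|k _]; last by rewrite exprM.
have -> : (1 - 'X^j) * \sum_(k < N.+1) ('X^j : P) ^+ k = 1 * (1 - 'X^(j * N.+1)).
  by rewrite exprM mul1r -[RHS]opprB subrX1 -mulNr opprB.
by apply: eqm_mulXn_sub1; rewrite -[N.+1]mul1n mulnA muln1 leq_mul2r; lia.
Qed.

(** [S^(N+1)] vanishes up to order [N] since [S] has no constant term, so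
    [(1 - S) * sum_(l <= N) S^l = 1 - S^(N+1)] is [1] up to order [N]. *)
Lemma eqm_qpoch_geom N : eqm N (qpoch N ^+ 3 * geom N) 1.
Proof.
apply: eqm_trans (_ : eqm N _ (jacobi N * geom N)) _.
  by apply: eqm_mul; [apply: eqm_qpoch_jacobi | apply: eqm_refl].
have -> : jacobi N * geom N = 1 - wpoly N ^+ N.+1.
  by rewrite /geom -[RHS]opprB subrX1 /wpoly; ring.
by move=> i le_iN; rewrite coefB coef_expr_low ?subr0 // wpoly_coef_eq0.
Qed.

Lemma p3E n : p3 n = (geom n)`_n.
Proof.
rewrite /p3 prodrXl; apply: (@eqm_inv_uniq _ n (qpoch n ^+ 3)) => //.
  rewrite -exprMn -[X in eqm _ _ X](expr1n _ 3).
  by apply: eqm_exp; apply: eqm_qpoch_geom_prod.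
exact: eqm_qpoch_geom.
Qed.

Theorem mainTheorem13 (n : nat) :
  p3 n = sum_comps P3 n weight1 /\ sum_comps P3 n weight1 = sum_comps P3 n weight2.
Proof.
split; first by rewrite p3E coef_geom.
by apply: eq_bigr => l _; apply: eq_bigr => f /andP[c_P3 _]; apply: weight1_weight2.
Qed.
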